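(* Let $N=pq$ with $p,q$ distinct primes. Let $d\in\mathbb{N}$ and $b_1,\dots,b_d\in\mathbb{Z}$. For each $i$ let $f_i=n_{2,i}X^2+n_{1,i}X+n_{0,i}\in\mathbb{Z}[X]$ be a polynomial of degree $2$ with $f_i(b_i)=N$. Suppose $\gcd(n_{2,i}b_i,N)=1$ for every $i$, and define $b_{d+i}:=n_{0,i}\cdot n_{2,i}^{-1}\cdot b_i^{-1}\bmod N$ for $1\le i\le d$ (inverses taken modulo $N$). If $\gcd(b_j-b_k,N)=1$ for all $j,k\in\{1,\dots,2d\}$ with $j\neq k$, then \[\nu\Big(\prod_{i=1}^d f_i\Big)=2dp+2dq-8d^2.\]
   Context: $Z_N=\{0,1,\dots,N-1\}$. For $g\in\mathbb{Z}[X]$, an element $x\in Z_N$ is called suitable for $g$ if $1<\gcd(g(x),N)<N$, and $\nu(g)$ denotes the number of $x\in Z_N$ suitable for $g$. *)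

From mathcomp Require Import all_boot all_order all_algebra.
Set Implicit Arguments. Unset Strict Implicit. Unset Printing Implicit Defensive.
Import Order.TTheory GRing.Theory Num.Theory.
Local Open Scope ring_scope.

(* Z_N = {0,...,N-1} is represented by 'I_N (ordinals, coerced to nat). *)

Definition suitable (N : nat) (g : {poly int}) (x : nat) : bool :=
  (1 < gcdz g.[x%:Z] N%:Z < N%:Z).

Definition nu (N : nat) (g : {poly int}) : nat :=
  #|[pred x : 'I_N | suitable N g x]|.

(* Inverse of a modulo m (meaningful when a is coprime to m):
   the Bezout coefficient u with u*a + v*m = gcd(a,m) = 1, reduced mod m. *)
Definition invmodz (a m : int) : int := ((egcdz a m).1 %% m)%Z.

Definition bsecond (N : nat) (f : nat -> {poly int}) (b : nat -> int) (i : nat) : int :=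
  (((f i)`_0 * invmodz (f i)`_2 N%:Z * invmodz (b i) N%:Z) %% N%:Z)%Z.

(* the extended family b_1..b_{2d}, indexed from 0 to 2d-1 *)
Definition bext (N d : nat) (f : nat -> {poly int}) (b : nat -> int) (j : nat) : int :=
  if (j < d)%N then b j else bsecond N f b (j - d).

From mathcomp Require Import all_boot all_order all_algebra.
From mathcomp Require Import ring.
Set Implicit Arguments. Unset Strict Implicit. Unset Printing Implicit Defensive.
Import Order.TTheory GRing.Theory Num.Theory.

(* Let r be p or q. By Vieta, f_i has modulo r exactly the roots b_i and
   n_{0,i} / (n_{2,i} b_i) = b_{d+i}, so r divides (prod f_i)(x) iff x is congruent
   modulo r to one of b_1, ..., b_{2d}. These 2d residues are pairwise distinct,
   so there are exactly 2d of them in Z_r. An x in Z_N is suitable iff exactly one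
   of p, q divides (prod f_i)(x), and the Chinese remainder theorem turns the count
   into 2d (q - 2d) + (p - 2d) 2d. *)

Lemma proper_gcdn_mul_primes (p q A : nat) : prime p -> prime q -> p != q ->
  (1 < gcdn A (p * q) < p * q)%N = ((p %| A) != (q %| A)).
Proof.
move=> p_pr q_pr neq_pq.
have cop_pq : coprime p q by rewrite prime_coprime // dvdn_prime2.
have pq_gt0 : (0 < p * q)%N by rewrite muln_gt0 !prime_gt0.
have gcd_gt1 : (1 < gcdn A (p * q))%N = ~~ coprime A (p * q).
  by rewrite ltn_neqAle gcdn_gt0 pq_gt0 orbT andbT eq_sym.
have gcd_ltN : (gcdn A (p * q) < p * q)%N = ~~ (p * q %| A).
  by rewrite ltn_neqAle dvdn_leq ?dvdn_gcdr // andbT (sameP eqP gcdn_idPr).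
rewrite gcd_gt1 gcd_ltN coprimeMr Gauss_dvd // !(coprime_sym A) !prime_coprime //.
by case: (p %| A); case: (q %| A).
Qed.

Local Open Scope ring_scope.

Lemma proper_gcdz_mul_primes (p q : nat) (a : int) : prime p -> prime q -> p != q ->
  (1 < gcdz a (p * q)%N%:Z < (p * q)%N%:Z) = ((p%:Z %| a)%Z != (q%:Z %| a)%Z).
Proof.
by move=> p_pr q_pr neq_pq; rewrite -proper_gcdn_mul_primes // !ltz_nat.
Qed.

Lemma card_pred_xor (T1 T2 : finType) (A : {pred T1}) (B : {pred T2}) :
  #|[pred u : T1 * T2 | (u.1 \in A) != (u.2 \in B)]|
    = (#|A| * #|[predC B]| + #|[predC A]| * #|B|)%N.
Proof.
rewrite -!cardX -cardUI (@eq_card0 _ [predI _ & _]) ?addn0 => [|[x y]].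
  by apply: eq_card => -[x y]; rewrite !inE; case: (x \in A); case: (y \in B).
by rewrite !inE; case: (x \in A); case: (y \in B).
Qed.

Section ChineseRemainder.
Variables p q : nat.
Hypotheses (p_gt0 : (0 < p)%N) (q_gt0 : (0 < q)%N) (cop_pq : coprime p q).

Definition crt_pair (x : 'I_(p * q)) : 'I_p * 'I_q :=
  (Ordinal (ltn_pmod x p_gt0), Ordinal (ltn_pmod x q_gt0)).

Lemma crt_pair_inj : injective crt_pair.
Proof.
move=> x y [eq_p eq_q]; apply/val_inj/eqP => /=.
rewrite -(modn_small (ltn_ord x)) -(modn_small (ltn_ord y)).
by rewrite chinese_remainder // eq_p eq_q !eqxx.
Qed.

Lemma card_crt_pair (P : {pred 'I_p * 'I_q}) :
  #|[preim crt_pair of P]| = #|P|.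
Proof.
have onto u : u \in codom crt_pair.
  by apply: (inj_card_onto crt_pair_inj); rewrite card_prod !card_ord.
by rewrite (card_preim crt_pair_inj); apply: eq_card => u; rewrite inE /= onto.
Qed.

End ChineseRemainder.

Lemma quadratic_eq0_Vieta (K : fieldType) (a b c x0 x : K) :
  a != 0 -> x0 != 0 -> c + b * x0 + a * x0 ^+ 2 = 0 ->
  (c + b * x + a * x ^+ 2 == 0) = (x == x0) || (x == c / (a * x0)).
Proof.
move=> a_neq0 x0_neq0 root_x0.
have b_eq : b = - (c + a * x0 ^+ 2) / x0.
  by apply: (mulIf x0_neq0); rewrite mulfVK // -[LHS]subr0 -root_x0; ring.
have -> : c + b * x + a * x ^+ 2 = a * ((x - x0) * (x - c / (a * x0))).
  by rewrite b_eq; field; rewrite x0_neq0 a_neq0.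
by rewrite !mulf_eq0 (negbTE a_neq0) !subr_eq0.
Qed.

Lemma horner_size3 (R : nzRingType) (g : {poly R}) (x : R) : size g = 3%N ->
  g.[x] = g`_0 + g`_1 * x + g`_2 * x ^+ 2.
Proof.
move=> size_g; rewrite horner_coef size_g !big_ord_recl big_ord0 /=.
by rewrite expr0 expr1 mulr1 addr0 addrA.
Qed.

Lemma absz_modz (r : nat) (a : int) :
  (0 < r)%N -> `|(a %% r%:Z)%Z|%N = (a %% r%:Z)%Z :> int.
Proof. by move=> r_gt0; rewrite gez0_abs // modz_ge0 // eqz_nat -lt0n. Qed.

Lemma ltn_absz_modz (r : nat) (a : int) : (0 < r)%N -> (`|(a %% r%:Z)%Z| < r)%N.
Proof. by move=> r_gt0; rewrite -ltz_nat absz_modz // ltz_pmod ?ltz_nat. Qed.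

Section PrimeField.
Variable r : nat.
Hypothesis r_pr : prime r.

Lemma dvdz_Fp (z : int) : (r%:Z %| z)%Z = (z%:~R == 0 :> 'F_r).
Proof. exact: dvdz_pcharf (pchar_Fp r_pr) z. Qed.

Lemma intr_Fp_eq_modz (i : nat) (a : int) : (i < r)%N ->
  ((i%:Z)%:~R == a%:~R :> 'F_r) = (i == `|(a %% r%:Z)%Z|%N).
Proof.
move=> lt_ir; rewrite -subr_eq0 -intrB -dvdz_Fp -eqz_mod_dvd modz_small.
  by rewrite -eqz_nat absz_modz ?prime_gt0.
by rewrite ltz_nat lt_ir andbT.
Qed.

Variable N : nat.
Hypothesis r_dvd_N : (r %| N)%N.

Lemma intr_Fp_N : (N%:Z%:~R : 'F_r) = 0.
Proof. by apply/eqP; rewrite -dvdz_Fp. Qed.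

Lemma intr_Fp_modz (z : int) : ((z %% N%:Z)%Z%:~R : 'F_r) = z%:~R.
Proof. by rewrite /modz intrB intrM intr_Fp_N mulr0 subr0. Qed.

Lemma coprimez_Fp_neq0 (z : int) : coprimez z N%:Z -> (z%:~R : 'F_r) != 0.
Proof.
move=> cop_zN; rewrite -dvdz_Fp.
by have := coprimez_dvdr r_dvd_N cop_zN; rewrite coprimezE coprime_sym prime_coprime.
Qed.

Lemma invmodz_Fp (z : int) : coprimez z N%:Z ->
  ((invmodz z N%:Z)%:~R : 'F_r) * z%:~R = 1.
Proof.
rewrite /coprimez /invmodz intr_Fp_modz; case: egcdzP => u v /= Bezout _ /eqP gcd1.
have := congr1 (intr : int -> 'F_r) Bezout.
by rewrite gcd1 intrD !intrM intr_Fp_N mulr0 addr0.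
Qed.

Lemma dvdz_Fp_quadratic (g : {poly int}) (x0 x : int) :
  size g = 3%N -> g.[x0] = N%:Z -> coprimez (g`_2 * x0) N%:Z ->
  (r%:Z %| g.[x])%Z =
   (x%:~R == x0%:~R :> 'F_r) ||
   (x%:~R == ((g`_0 * invmodz g`_2 N%:Z * invmodz x0 N%:Z) %% N%:Z)%Z%:~R :> 'F_r).
Proof.
rewrite coprimezMl => size_g root_x0 /andP[cop_g2 cop_x0].
have intr_horner (y : int) : (g.[y]%:~R : 'F_r) =
    (g`_0)%:~R + (g`_1)%:~R * y%:~R + (g`_2)%:~R * y%:~R ^+ 2.
  by rewrite horner_size3 // !expr2 !intrD !intrM.
have g2_neq0 := coprimez_Fp_neq0 cop_g2; have x0_neq0 := coprimez_Fp_neq0 cop_x0.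
have intr_invmodz z : coprimez z N%:Z -> z%:~R != 0 :> 'F_r ->
    (invmodz z N%:Z)%:~R = (z%:~R)^-1 :> 'F_r.
  by move=> cop_z z_neq0; apply: (mulIf z_neq0); rewrite invmodz_Fp // mulVf.
rewrite dvdz_Fp intr_horner (quadratic_eq0_Vieta _ g2_neq0 x0_neq0).
  by rewrite intr_Fp_modz !intrM !intr_invmodz // invfM mulrA.
by rewrite -intr_horner root_x0 intr_Fp_N.
Qed.
End PrimeField.

Section RootsModPrime.
Variables (N d : nat) (f : nat -> {poly int}) (b : nat -> int).
Hypothesis size_f : forall i, (i < d)%N -> size (f i) = 3%N.
Hypothesis root_f : forall i, (i < d)%N -> (f i).[b i] = N%:Z.
Hypothesis coprime_f : forall i, (i < d)%N -> coprimez ((f i)`_2 * b i) N%:Z.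
Hypothesis coprime_bext : forall j k, (j < 2 * d)%N -> (k < 2 * d)%N -> j != k ->
  coprimez (bext N d f b j - bext N d f b k) N%:Z.

Definition bext_congr (r : nat) (x : int) : bool :=
  [exists j : 'I_(2 * d), x%:~R == (bext N d f b j)%:~R :> 'F_r].

Lemma exists_bext (P : pred int) :
  [exists j : 'I_(2 * d), P (bext N d f b j)] =
  [exists i : 'I_d, P (b i) || P (bsecond N f b i)].
Proof.
have lt_d2d (i : 'I_d) : (i < 2 * d)%N by rewrite mul2n -addnn ltn_addr.
have lt_dd2d (i : 'I_d) : (d + i < 2 * d)%N by rewrite mul2n -addnn ltn_add2l.
apply/existsP/existsP => [[j]|[i /orP[]] Pi].
- rewrite /bext; case: ifP => [lt_jd Pj | /negbT].
    by exists (Ordinal lt_jd); rewrite Pj.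
  rewrite -leqNgt => le_dj Pj.
  have lt_jd : (j - d < d)%N by rewrite ltn_subLR // addnn -mul2n.
  by exists (Ordinal lt_jd); rewrite Pj orbT.
- by exists (Ordinal (lt_d2d i)); rewrite /bext /= ltn_ord.
- by exists (Ordinal (lt_dd2d i)); rewrite /bext /= ltnNge leq_addr addKn.
Qed.

Variable r : nat.
Hypotheses (r_pr : prime r) (r_dvd_N : (r %| N)%N).

Lemma dvdz_prod_horner (x : int) :
  (r%:Z %| (\prod_(i < d) f i).[x])%Z = bext_congr r x.
Proof.
rewrite (dvdz_Fp r_pr) horner_prod rmorph_prod /= /bext_congr.
rewrite (exists_bext (fun y => x%:~R == y%:~R :> 'F_r)).
have root_fi (i : 'I_d) : ((f i).[x]%:~R == 0 :> 'F_r) =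
    (x%:~R == (b i)%:~R :> 'F_r) || (x%:~R == (bsecond N f b i)%:~R :> 'F_r).
  have lt_id := ltn_ord i; rewrite -(dvdz_Fp r_pr).
  by rewrite (dvdz_Fp_quadratic r_pr r_dvd_N _
    (size_f lt_id) (root_f lt_id) (coprime_f lt_id)).
by apply/prodf_eq0/existsP => -[i]; [rewrite root_fi | rewrite -root_fi]; exists i.
Qed.

Lemma bext_congr_modn (x : nat) : bext_congr r x%:Z = bext_congr r (x %% r)%N%:Z.
Proof. by rewrite /bext_congr -modz_nat (intr_Fp_modz r_pr (dvdnn r)). Qed.

Lemma card_bext_congr : #|[pred i : 'I_r | bext_congr r i]| = (2 * d)%N.
Proof.
have r_gt0 := prime_gt0 r_pr.
pose h (j : 'I_(2 * d)) : 'I_r := Ordinal (ltn_absz_modz (bext N d f b j) r_gt0).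
have h_inj : injective h.
  move=> j k /(congr1 (fun i : 'I_r => (i : nat)%:Z)) /= /eqP.
  rewrite !absz_modz // eqz_mod_dvd (dvdz_Fp r_pr) => /eqP bext_jk.
  apply/eqP; apply: contraT => neq_jk.
  have := coprime_bext (ltn_ord j) (ltn_ord k) neq_jk.
  by move/(coprimez_Fp_neq0 r_pr r_dvd_N); rewrite bext_jk eqxx.
rewrite -[RHS](card_ord (2 * d)) -(card_codom h_inj); apply: eq_card => i.
rewrite inE; apply/existsP/codomP => -[j].
  by rewrite (intr_Fp_eq_modz r_pr _ (ltn_ord i)) => /eqP i_eq; exists j; apply: val_inj.
by move=> ->; exists j; rewrite (intr_Fp_eq_modz r_pr _ (ltn_ord _)).
Qed.
End RootsModPrime.

Theorem theorem2p11 (p q : nat) (d : nat) (b : nat -> int) (f : nat -> {poly int}) :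
  prime p -> prime q -> p != q ->
  (forall i, (i < d)%N -> size (f i) = 3%N) ->
  (forall i, (i < d)%N -> (f i).[b i] = (p * q)%N%:Z) ->
  (forall i, (i < d)%N -> coprimez ((f i)`_2 * b i) (p * q)%N%:Z) ->
  (forall j k, (j < 2 * d)%N -> (k < 2 * d)%N -> j != k ->
     coprimez (bext (p * q) d f b j - bext (p * q) d f b k) (p * q)%N%:Z) ->
  (nu (p * q) (\prod_(i < d) f i))%:Z
    = (2 * d * p + 2 * d * q)%N%:Z - (8 * d ^ 2)%N%:Z.
Proof.
move=> p_pr q_pr neq_pq size_f root_f coprime_f coprime_bext.
have p_dvd_N : (p %| p * q)%N by rewrite dvdn_mulr.
have q_dvd_N : (q %| p * q)%N by rewrite dvdn_mull.
have cop_pq : coprime p q by rewrite prime_coprime // dvdn_prime2.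
set A := [pred i : 'I_p | bext_congr (p * q) d f b p i].
set B := [pred j : 'I_q | bext_congr (p * q) d f b q j].
have suitableE : [pred x : 'I_(p * q) | suitable (p * q) (\prod_(i < d) f i) x] =i
    [preim crt_pair (prime_gt0 p_pr) (prime_gt0 q_pr) of
       [pred u | (u.1 \in A) != (u.2 \in B)]].
  move=> x; rewrite !inE /suitable proper_gcdz_mul_primes //.
  rewrite !(dvdz_prod_horner size_f root_f coprime_f) //.
  by rewrite (bext_congr_modn _ _ _ _ p_pr) (bext_congr_modn _ _ _ _ q_pr).
have cardA : #|A| = (2 * d)%N by exact: card_bext_congr.
have cardB : #|B| = (2 * d)%N by exact: card_bext_congr.
have cardCA : p = (2 * d + #|[predC A]|)%N by rewrite -cardA cardC card_ord.
have cardCB : q = (2 * d + #|[predC B]|)%N by rewrite -cardB cardC card_ord.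
rewrite /nu (eq_card suitableE) card_crt_pair // card_pred_xor cardA cardB.
rewrite [in RHS]cardCA [in RHS]cardCB !PoszD !PoszM; ring.
Qed.
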